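(* Let $p,q\ge2$ be natural numbers. Then the UHF-algebra $M_{q^\infty}$ contains elements $x_2,x_3,\dots,x_p$ such that $\|x_i\|\le1$, $x_ix_j=0$ for $i\neq j$, and $x_i^*x_j=\delta_{i,j}\,x_2^*x_2$ for all $i,j\in\{2,\dots,p\}$, and such that $x_2^*x_2$ has $\frac1p$ Lebesgue spectral measure, i.e. $\tau(f(x_2^*x_2))=\frac1p\int_0^1f(t)\,dt$ for all $f\in C_0(0,1]$, where $\tau$ is the unique tracial state of $M_{q^\infty}$.
   Context: $M_{q^\infty}$ is the UHF-algebra given as the inductive limit of $M_{q^n}\to M_{q^{n+1}}$, $x\mapsto1_q\otimes x$. *)

From HB Require Import structures.
From mathcomp Require Import all_boot all_order all_algebra.
From mathcomp Require Import complex mxtens.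
From mathcomp Require Import all_classical all_reals all_analysis.

Set Implicit Arguments.
Unset Strict Implicit.
Unset Printing Implicit Defensive.

Import Order.TTheory GRing.Theory Num.Theory.
Local Open Scope ring_scope.
Local Open Scope complex_scope.

(* The n-th building block is M_{q^n}(C) with C := R[i]; the connecting map   *)
(* M_{q^n} -> M_{q^(n+1)} is x |-> 1_q (x) x (Kronecker product).             *)
(* M_{q^oo} is the C*-completion of the algebraic inductive limit; we         *)
(* represent its elements by sequences (x_n)_n, x_n in M_{q^n}, that are      *)
(* Cauchy in operator norm along the connecting maps; every element of        *)
(* M_{q^oo} is such a limit, two sequences represent the same element iff     *)
(* their difference tends to 0 in norm, and the algebra operations (product,  *)
(* adjoint, linear combinations) are computed termwise.                       *)

Section UHF.
Variables (R : realType) (q : nat).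
Local Notation C := (R[i]).

Definition blk (n : nat) := 'M[C]_(q ^ n).

Definition adjmx m n (A : 'M[C]_(m, n)) : 'M[C]_(n, m) :=
  (map_mx (fun z : C => conjc z) A)^T.

Definition uhf_step (n : nat) (x : blk n) : blk n.+1 :=
  castmx (esym (expnS q n), esym (expnS q n)) ((1%:M : 'M[C]_q) *t x).

Fixpoint uhf_emb (n k : nat) : blk n -> blk (k + n) :=
  match k return blk n -> blk (k + n) with
  | 0 => fun x => x
  | k'.+1 => fun x => uhf_step (@uhf_emb n k' x)
  end.

Definition vnorm2 m (v : 'cV[C]_m) : C := \sum_(i < m) `|v i 0| ^+ 2.

Definition opnorm_le m (A : 'M[C]_m) (r : R) : Prop :=
  forall v : 'cV[C]_m, vnorm2 (A *m v) <= (r ^+ 2)%:C * vnorm2 v.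

Definition uhf_seq := forall n : nat, blk n.

Definition uhf_cauchy (x : uhf_seq) : Prop :=
  forall eps : R, 0 < eps -> exists N : nat, forall n k : nat, (N <= n)%N ->
    opnorm_le (@uhf_emb n k (x n) - x (k + n)%N) eps.

Definition uhf_null (x : uhf_seq) : Prop :=
  forall eps : R, 0 < eps -> exists N : nat, forall n : nat, (N <= n)%N ->
    opnorm_le (x n) eps.

(* ||x|| <= r in M_{q^oo} (||x|| = lim_n ||x_n||) *)
Definition uhf_norm_le (x : uhf_seq) (r : R) : Prop :=
  forall eps : R, 0 < eps -> exists N : nat, forall n : nat, (N <= n)%N ->
    opnorm_le (x n) (r + eps).

Definition uhf_mul (x y : uhf_seq) : uhf_seq := fun n => x n *m y n.
Definition uhf_adj (x : uhf_seq) : uhf_seq := fun n => adjmx (x n).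
Definition uhf_sub (x y : uhf_seq) : uhf_seq := fun n => x n - y n.
Definition uhf_scale (c : C) (x : uhf_seq) : uhf_seq := fun n => c *: x n.

(* normalized trace on M_{q^n}; tau = lim_n of it is the unique tracial state *)
Definition ntr (n : nat) (A : blk n) : C := \tr A / (q ^ n)%:R.

Definition mxpow m (A : 'M[C]_m) (k : nat) : 'M[C]_m := iter k (mulmx A) 1%:M.

Definition poly_mx (P : {poly R}) m (A : 'M[C]_m) : 'M[C]_m :=
  \sum_(i < size P) (P`_i)%:C *: mxpow A i.

(* tau(f(a)) = c, for a positive element a of norm <= 1 (spectrum in [0,1])  *)
(* and f continuous on [0,1] with f(0) = 0: by continuity of the functional   *)
(* calculus, f(a) = lim_k P_k(a) for every sequence of polynomials P_k with   *)
(* P_k(0) = 0 converging uniformly to f on [0,1]; and                          *)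
(* tau(P_k(a)) = lim_n ntr (P_k(a_n)).                                         *)
Definition tau_fcalc_is (f : R -> R) (a : uhf_seq) (c : C) : Prop :=
  forall P : nat -> {poly R},
    (forall k, (P k).[0] = 0) ->
    (forall eps : R, 0 < eps -> exists K : nat, forall k : nat, (K <= k)%N ->
        forall t : R, 0 <= t <= 1 -> `|f t - (P k).[t]| <= eps) ->
    forall eps : R, 0 < eps -> exists K : nat, forall k : nat, (K <= k)%N ->
      exists N : nat, forall n : nat, (N <= n)%N ->
        `|ntr (poly_mx (P k) (a n)) - c| <= eps%:C.

End UHF.

(* At level n take L_n = floor (q^n / p) basis vectors in each of p pairwise disjoint
   blocks of indices of M_{q^n}, and let x_i send the j-th vector of block 1 to the j-th
   vector of block i with weight sqrt (1 - j p / q^n).  Then x_i x_j = 0 for j >= 2 and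
   x_i^* x_j = delta_ij d_n, where d_n is diagonal with eigenvalues 1 - j p / q^n (j < L_n);
   hence tau (P (d_n)) = q^-n sum_j P (1 - j p / q^n) is a Riemann sum of (1/p) int_0^1 P.
   The blocks are chosen compatibly with the connecting map x |-> 1_q (x) x, so that the
   image of x_i at level n and x_i at level n + k differ only in their weights, by at
   most sqrt (p / q^n) in norm: the sequences are Cauchy. *)

From HB Require Import structures.
From mathcomp Require Import all_boot all_order all_algebra.
From mathcomp Require Import complex mxtens.
From mathcomp Require Import all_classical all_reals all_analysis.
From mathcomp Require Import ring lra.
Import Order.TTheory GRing.Theory Num.Theory.
Import numFieldNormedType.Exports.

Set Implicit Arguments.
Unset Strict Implicit.
Unset Printing Implicit Defensive.

Local Open Scope ring_scope.
Local Open Scope complex_scope.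
Local Open Scope classical_set_scope.

Section UnitInterval.
Variable R : realType.
Local Notation mu := (@lebesgue_measure R).
Implicit Types (f g : R -> R) (a b s t e : R).

Lemma integrable01 f (D : set R) : {within `[0, 1], continuous f} ->
  measurable D -> D `<=` `[0, 1] -> mu.-integrable D (EFin \o f).
Proof.
move=> fc mD D01.
have int01 : mu.-integrable `[0, 1] (EFin \o f).
  by apply: continuous_compact_integrable fc; exact: segment_compact.
exact: integrableS int01.
Qed.

Lemma within01_continuousB f g : {within `[0, 1], continuous f} ->
  {within `[0, 1], continuous g} -> {within `[0, 1], continuous (f \- g)}.
Proof. by move=> fc gc x; apply: cvgB; [exact: fc | exact: gc]. Qed.

Lemma within01_continuous_cst c : {within `[0, 1], continuous (cst c : R -> R)}.
Proof. by move=> x; exact: cvg_cst. Qed.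

Lemma lebesgue_measure_itv_oc a b : a <= b -> fine (mu `]a, b]) = b - a.
Proof.
rewrite le_eqVlt => /predU1P[<-|ab]; last by rewrite lebesgue_measure_itv /= lte_fin ab.
by rewrite lebesgue_measure_itv /= ltxx subrr.
Qed.

Lemma lebesgue_measure_itv_cc a b : a <= b -> fine (mu `[a, b]) = b - a.
Proof.
rewrite le_eqVlt => /predU1P[<-|ab]; last by rewrite lebesgue_measure_itv /= lte_fin ab.
by rewrite lebesgue_measure_itv /= ltxx subrr.
Qed.

Lemma normr_Rintegral01_le f (D : set R) e : {within `[0, 1], continuous f} ->
  measurable D -> D `<=` `[0, 1] -> (forall t, D t -> `|f t| <= e) ->
  `|\int[mu]_(t in D) f t| <= e * fine (mu D).
Proof.
move=> fc mD D01 fe.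
have intc c : mu.-integrable D (EFin \o cst c).
  by apply: integrable01 => //; exact: within01_continuous_cst.
have intf := integrable01 fc mD D01.
rewrite ler_norml -mulNr -!(Rintegral_cst mu mD); apply/andP; split.
  apply: le_Rintegral => //; first exact: intc.
  by move=> t /fe; rewrite ler_norml => /andP[].
apply: le_Rintegral => //; first exact: intc.
by move=> t /fe; rewrite ler_norml => /andP[].
Qed.

Lemma Rintegral_itv0_split f a b : {within `[0, 1], continuous f} ->
  0 <= a -> a <= b -> b <= 1 ->
  \int[mu]_(t in `[0, b]) f t = \int[mu]_(t in `[0, a]) f t + \int[mu]_(t in `]a, b]) f t.
Proof.
move=> fc a0 ab b1.
rewrite -(@Rintegral_itvB _ f (BLeft 0) (BRight b) a) ?bnd_simp //.
  by rewrite addrC subrK.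
by apply: integrable01 => //; apply: subset_itvl; rewrite bnd_simp.
Qed.

Lemma Rintegral01_close f g e :
  {within `[0, 1], continuous f} -> {within `[0, 1], continuous g} ->
  (forall t, 0 <= t <= 1 -> `|f t - g t| <= e) ->
  `|\int[mu]_(t in `[0, 1]) f t - \int[mu]_(t in `[0, 1]) g t| <= e.
Proof.
move=> fc gc fg; rewrite -RintegralB //; [|exact: integrable01..].
apply: le_trans (normr_Rintegral01_le (within01_continuousB fc gc) _ _ _) _ => //.
  by move=> t; rewrite /= in_itv /=; exact: fg.
by rewrite lebesgue_measure_itv_cc ?ler01 // subr0 mulr1.
Qed.

Section Lipschitz.
Variables (g : R -> R) (M B : R).
Hypothesis g_cont : {within `[0, 1], continuous g}.
Hypothesis g_lip : forall s t, 0 <= s <= 1 -> 0 <= t <= 1 -> `|g s - g t| <= M * `|s - t|.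
Hypothesis g_bnd : forall t, 0 <= t <= 1 -> `|g t| <= B.

Let lip_ge0 : 0 <= M.
Proof.
have := g_lip (s := 0) (t := 1); rewrite !lexx ler01 sub0r normrN normr1 mulr1.
by move=> /(_ isT isT); apply: le_trans.
Qed.

Lemma Rintegral_oc_right_endpoint a b : 0 <= a -> a <= b -> b <= 1 ->
  `|\int[mu]_(t in `]a, b]) g t - g b * (b - a)| <= M * (b - a) ^+ 2.
Proof.
move=> a0 ab b1.
have sub01 : `]a, b] `<=` `[0, 1] by apply: subset_itv; rewrite bnd_simp.
have intg := integrable01 g_cont (measurable_itv _) sub01.
have intc := integrable01 (@within01_continuous_cst (g b)) (measurable_itv _) sub01.
have mab := lebesgue_measure_itv_oc ab.
rewrite -{1}mab -Rintegral_cst // -RintegralB // expr2 mulrA -mab.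
apply: normr_Rintegral01_le => //.
  exact: (within01_continuousB g_cont (@within01_continuous_cst (g b))).
move=> t; rewrite /= in_itv /= => /andP[lt_at le_tb].
have t01 : 0 <= t <= 1 by rewrite (le_trans a0 (ltW lt_at)) (le_trans le_tb b1).
apply: le_trans (g_lip t01 _) _; first by rewrite (le_trans a0 ab).
rewrite distrC ger0_norm ?subr_ge0 //.
by rewrite mab ler_wpM2l // lerD2l lerN2 ltW.
Qed.

Let bnd_ge0 : 0 <= B.
Proof. by apply: le_trans (normr_ge0 (g 0)) (g_bnd _); rewrite lexx ler01. Qed.

Lemma riemann_sum_approx (L : nat) h : 0 < h -> L%:R * h <= 1 -> 1 < L.+1%:R * h ->
  `|h * \sum_(x < L) g (1 - x%:R * h) - \int[mu]_(t in `[0, 1]) g t| <= (M + B) * h.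
Proof.
move=> h0 Lh1 Lh1'.
pose a (x : nat) := 1 - x%:R * h.
pose G y := \int[mu]_(t in `[0, y]) g t.
have aS x : a x.+1 = a x - h by rewrite /a -natr1 mulrDl mul1r opprD addrA.
have a_le1 x : a x <= 1 by rewrite /a gerBl mulr_ge0 // ltW.
have a_ge0 x : (x <= L)%N -> 0 <= a x.
  by move=> xL; rewrite subr_ge0 (le_trans _ Lh1) // ler_wpM2r ?ler_nat // ltW.
have aL_le : a L <= h by move: Lh1'; rewrite /a -natr1 mulrDl mul1r; lra.
have G1 : G 1 = G (a L) + \sum_(x < L) \int[mu]_(t in `]a x.+1, a x]) g t.
  rewrite -(big_mkord xpredT (fun x => \int[mu]_(t in `]a x.+1, a x]) g t)).
  rewrite (@telescope_sumr_eq _ _ _ (fun x => - G (a x))) //.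
    by rewrite opprK addrA addrN add0r /a mul0r subr0.
  move=> x /andP[_ xL]; rewrite /G (@Rintegral_itv0_split g (a x.+1) (a x)) //.
  - by rewrite opprK addKr.
  - exact: a_ge0.
  - by rewrite aS gerBl ltW.
have GaL : `|G (a L)| <= B * h.
  have sub01 : `[0, a L] `<=` `[0, 1] by apply: subset_itvl; rewrite bnd_simp.
  apply: le_trans (normr_Rintegral01_le g_cont _ sub01 (fun t Dt => g_bnd (sub01 _ Dt))) _ => //.
  by rewrite lebesgue_measure_itv_cc ?a_ge0 // subr0 ler_wpM2l.
rewrite -[\int[mu]_(t in `[0, 1]) g t]/(G 1) G1 mulr_sumr opprD addrA addrAC -sumrB.
apply: le_trans (ler_normB _ _) _; rewrite mulrDl lerD //.
apply: le_trans (ler_norm_sum _ _ _) _.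
apply: le_trans (_ : \sum_(x < L) M * h ^+ 2 <= _).
  apply: ler_sum => x _; rewrite distrC mulrC.
  have := @Rintegral_oc_right_endpoint (a x.+1) (a x); rewrite aS subKr.
  by apply; [rewrite -aS a_ge0 | rewrite gerBl ltW | exact: a_le1].
rewrite sumr_const card_ord -mulr_natr -mulrA ler_wpM2l ?lip_ge0 //.
by rewrite expr2 -mulrA; apply: ler_piMr; [exact: ltW | rewrite mulrC].
Qed.

End Lipschitz.

Lemma normr_subXX01 s t i : 0 <= s <= 1 -> 0 <= t <= 1 ->
  `|s ^+ i - t ^+ i| <= i%:R * `|s - t|.
Proof.
move=> /andP[s0 s1] /andP[t0 t1]; elim: i => [|i IH]; first by rewrite subrr normr0 mul0r.
have -> : s ^+ i.+1 - t ^+ i.+1 = s * (s ^+ i - t ^+ i) + (s - t) * t ^+ i.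
  by rewrite !exprS; ring.
apply: le_trans (ler_normD _ _) _.
rewrite !normrM (ger0_norm s0) (ger0_norm (exprn_ge0 _ t0)) -natr1 mulrDl mul1r.
apply: lerD; first by apply: le_trans IH; rewrite ler_piMl.
by rewrite ler_piMr // exprn_ile1.
Qed.

Definition coef_norm1 (P : {poly R}) := \sum_(i < size P) `|P`_i|.

Definition coef_lip (P : {poly R}) := \sum_(i < size P) `|P`_i| * i%:R.

Lemma horner_lipschitz01 (P : {poly R}) s t : 0 <= s <= 1 -> 0 <= t <= 1 ->
  `|P.[s] - P.[t]| <= coef_lip P * `|s - t|.
Proof.
move=> s01 t01; rewrite !horner_coef -sumrB /coef_lip mulr_suml.
apply: le_trans (ler_norm_sum _ _ _) _; apply: ler_sum => i _.
by rewrite -mulrBr normrM -mulrA ler_wpM2l // normr_subXX01.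
Qed.

Lemma horner_bounded01 (P : {poly R}) t : 0 <= t <= 1 -> `|P.[t]| <= coef_norm1 P.
Proof.
move=> /andP[t0 t1]; rewrite horner_coef /coef_norm1.
apply: le_trans (ler_norm_sum _ _ _) _; apply: ler_sum => i _.
by rewrite normrM normrX (ger0_norm t0) ler_piMr // exprn_ile1.
Qed.

Lemma horner_continuous01 (P : {poly R}) : {within `[0, 1], continuous (horner P)}.
Proof. by apply: continuous_subspaceT => x; exact: continuous_horner. Qed.

End UnitInterval.

Section DivMod.
Local Open Scope nat_scope.

Lemma eqn_divmod d a c m : c < d ->
  (m == a * d + c) = (m %/ d == a) && (m %% d == c).
Proof.
move=> cd; apply/eqP/andP => [->|[/eqP <- /eqP <-]]; last by rewrite -divn_eq.
have d0 : 0 < d by apply: leq_ltn_trans cd.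
by rewrite divnMDl // modnMDl divn_small // modn_small // addn0.
Qed.

Lemma divmodn_inj d a a' c c' : c < d -> c' < d ->
  a * d + c = a' * d + c' -> a = a' /\ c = c'.
Proof.
move=> cd c'd e.
have := eqn_divmod a (a * d + c) cd; rewrite eqxx => /esym/andP[/eqP da /eqP ma].
have := eqn_divmod a' (a' * d + c') c'd; rewrite eqxx => /esym/andP[/eqP da' /eqP ma'].
by split; [rewrite -[LHS]da e da' | rewrite -[LHS]ma e ma'].
Qed.

Lemma ltn_muladd a b c d : a < b -> c < d -> a * d + c < b * d.
Proof.
move=> ab cd; apply: (@leq_trans (a.+1 * d)); first by rewrite mulSn addnC ltn_add2r.
by rewrite leq_mul2r ab orbT.
Qed.

End DivMod.

Section IndexMaps.
Local Open Scope nat_scope.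
Variables q p : nat.
Hypotheses (q_gt1 : 1 < q) (p_gt1 : 1 < p).

Let q_gt0 : 0 < q. Proof. exact: ltnW. Qed.
Let p_gt0 : 0 < p. Proof. exact: ltnW. Qed.

Definition rk n := q ^ n %/ p.

(* [slot n i x] is the position of the [x]-th vector of block [i] at level [n], written
   in base [q] with its digits reversed ([digit_rev] below), so that the connecting map,
   which prepends a most significant digit, appends the digit [x %% q] to the slot of the
   vector [x %/ q] of level [n].  The slots in use at level [n] form the initial segment
   [0, p * rk n), and the vectors created at level [n.+1] fill the slots right after it. *)
Fixpoint slot n i x :=
  if n is n'.+1 then
    if x < rk n' * q then slot n' i (x %/ q) * q + x %% q
    else p * (rk n' * q) + i.-1 * (rk n - rk n' * q) + (x - rk n' * q)
  else 0.

Lemma rk0 : rk 0 = 0.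
Proof. by rewrite /rk expn0 divn_small. Qed.

Lemma rk_mulq n : rk n * q <= rk n.+1.
Proof. by rewrite /rk leq_divRL // expnSr mulnAC leq_mul2r leq_trunc_div orbT. Qed.

Lemma rk_mulX n k : rk n * q ^ k <= rk (k + n).
Proof.
elim: k => [|k IH]; first by rewrite muln1.
by rewrite expnSr mulnA addSn (leq_trans _ (rk_mulq _)) // leq_mul2r IH orbT.
Qed.

Lemma rk_ub n : p * rk n <= q ^ n.
Proof. by rewrite mulnC leq_trunc_div. Qed.

Lemma rk_lb n : q ^ n < p * (rk n).+1.
Proof. by rewrite {1}(divn_eq (q ^ n) p) mulnS mulnC addnC ltn_add2r ltn_pmod. Qed.

Lemma slot_lt n i x : 0 < i <= p -> x < rk n -> slot n i x < p * rk n.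
Proof.
move=> /andP[i0 ip]; elim: n x => [|n IH] x; first by rewrite rk0.
move=> xS /=; case: ifP => xq.
  have x'lt : x %/ q < rk n by rewrite ltn_divLR.
  apply: (@leq_trans (p * (rk n * q))); last by rewrite leq_mul2l rk_mulq orbT.
  by rewrite mulnA ltn_muladd ?IH ?ltn_mod.
move: xq => /negbT; rewrite -leqNgt => xq.
have hS : rk n.+1 = rk n * q + (rk n.+1 - rk n * q) by rewrite subnKC // rk_mulq.
rewrite [X in _ < p * X]hS mulnDr -addnA ltn_add2l.
apply: (@leq_trans (i.-1 * (rk n.+1 - rk n * q) + (rk n.+1 - rk n * q))).
  by rewrite ltn_add2l ltn_subLR // -hS.
by rewrite addnC -mulSn prednK // leq_mul2r ip orbT.
Qed.

Lemma slot_inj n i i' x x' : 0 < i <= p -> 0 < i' <= p -> x < rk n -> x' < rk n ->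
  slot n i x = slot n i' x' -> i = i' /\ x = x'.
Proof.
move=> hi hi'; elim: n x x' => [|n IH] x x'; first by rewrite rk0.
have old_lt j y : 0 < j <= p -> y < rk n * q ->
    slot n j (y %/ q) * q + y %% q < p * (rk n * q).
  by move=> hj yq; rewrite mulnA ltn_muladd ?slot_lt ?ltn_mod ?ltn_divLR.
move=> xS x'S /=; case: ifP => xq; case: ifP => x'q.
- move=> /divmodn_inj[]; rewrite ?ltn_mod // => /IH[] //; rewrite ?ltn_divLR //.
  by move=> -> eq_div eq_mod; split=> //; rewrite (divn_eq x q) (divn_eq x' q) eq_div eq_mod.
- by move=> e; have := old_lt _ _ hi xq; rewrite e -addnA ltnNge leq_addr.
- by move=> e; have := old_lt _ _ hi' x'q; rewrite -e -addnA ltnNge leq_addr.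
move: xq x'q => /negbT; rewrite -leqNgt => xq /negbT; rewrite -leqNgt => x'q.
have hS : rk n.+1 = rk n * q + (rk n.+1 - rk n * q) by rewrite subnKC // rk_mulq.
move=> /eqP; rewrite -!addnA eqn_add2l => /eqP /divmodn_inj[]; rewrite ?ltn_subLR -?hS //.
move=> /(congr1 S); rewrite !prednK ?(andP hi).1 ?(andP hi').1 // => ->.
by move=> /(congr1 (addn^~ (rk n * q))); rewrite !subnK.
Qed.

Fixpoint digit_rev n k :=
  if n is n'.+1 then k %% q * q ^ n' + digit_rev n' (k %/ q) else 0.

Lemma digit_rev_lt n k : digit_rev n k < q ^ n.
Proof.
elim: n k => [|n IH] k /=; first by rewrite expn0.
by rewrite expnS ltn_muladd ?ltn_mod.
Qed.

Lemma digit_rev_step n r c : c < q -> digit_rev n.+1 (r * q + c) = c * q ^ n + digit_rev n r.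
Proof. by move=> cq /=; rewrite modnMDl modn_small // divnMDl // divn_small // addn0. Qed.

Lemma digit_rev_inj n k k' : k < q ^ n -> k' < q ^ n -> digit_rev n k = digit_rev n k' -> k = k'.
Proof.
elim: n k k' => [|n IH] k k'; first by rewrite expn0 !ltnS !leqn0 => /eqP-> /eqP->.
move=> kq k'q /divmodn_inj[]; rewrite ?digit_rev_lt ?ltn_mod // => eq_mod /IH eq_div.
by rewrite (divn_eq k q) (divn_eq k' q) eq_div ?eq_mod // ltn_divLR // -expnSr.
Qed.

Definition idx n i x := digit_rev n (slot n i x).

Lemma idx_lt n i x : idx n i x < q ^ n.
Proof. exact: digit_rev_lt. Qed.

Lemma idx_inj n i i' x x' : 0 < i <= p -> 0 < i' <= p -> x < rk n -> x' < rk n ->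
  idx n i x = idx n i' x' -> i = i' /\ x = x'.
Proof.
move=> hi hi' xn x'n e; apply: (slot_inj hi hi' xn x'n); apply: digit_rev_inj e.
  exact: leq_trans (slot_lt hi xn) (rk_ub n).
exact: leq_trans (slot_lt hi' x'n) (rk_ub n).
Qed.

Lemma idx_step n i x : x < rk n * q -> idx n.+1 i x = x %% q * q ^ n + idx n i (x %/ q).
Proof. by move=> xq; rewrite /idx -digit_rev_step ?ltn_mod //= xq. Qed.

End IndexMaps.

Lemma big_at_most_one (I : finType) (V : nmodType) (P : pred I) (F : I -> V) :
  (forall i j, P i -> P j -> i = j) ->
  \sum_(i | P i) F i = if [pick i | P i] is Some i then F i else 0.
Proof.
move=> P1; case: pickP => [i Pi | P0]; last by rewrite big_pred0.
by rewrite (big_pred1 i) // => j; apply/idP/eqP => [Pj | ->]; first exact: P1.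
Qed.

Lemma sum_fibers (I J : finType) (V : nmodType) (f : I -> J) (F : I -> V) :
  \sum_j \sum_(i | f i == j) F i = \sum_i F i.
Proof. by rewrite (partition_big f xpredT). Qed.

Section WeightedPermutationMatrix.
Variable R : realType.
Local Notation C := R[i].

Definition wperm_mx m L (r s : 'I_L -> 'I_m) (w : 'I_L -> C) : 'M[C]_m :=
  \matrix_(k, l) \sum_(j | (r j == k) && (s j == l)) w j.

Variables m L : nat.
Implicit Types (r s : 'I_L -> 'I_m) (v w : 'I_L -> C).

Lemma wperm_mxB r s v w :
  wperm_mx r s v - wperm_mx r s w = wperm_mx r s (fun j => v j - w j).
Proof. by apply/matrixP => k l; rewrite !mxE -sumrB. Qed.

Lemma adjmx_wperm r s w : adjmx (wperm_mx r s w) = wperm_mx s r (fun j => conjc (w j)).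
Proof. by apply/matrixP => k l; rewrite !mxE rmorph_sum; apply: eq_bigl => j; rewrite andbC. Qed.

Lemma wperm_mx_injl r s w j l : injective r ->
  wperm_mx r s w (r j) l = (s j == l)%:R * w j.
Proof.
move=> r_inj; rewrite mxE big_at_most_one => [|i i' /andP[/eqP + _] /andP[/eqP + _]]; last first.
  by move=> e e'; apply: r_inj; rewrite e e'.
case: pickP => [i /andP[/eqP /r_inj -> ->] | /(_ j)]; first by rewrite mul1r.
by rewrite eqxx /= => /negbT/negbTE->; rewrite mul0r.
Qed.

Lemma mulmx_wpermE n r s w (B : 'M[C]_(m, n)) k l :
  (wperm_mx r s w *m B) k l = \sum_(j | r j == k) w j * B (s j) l.
Proof.
rewrite mxE; under eq_bigr do rewrite mxE big_distrl.
rewrite (exchange_big_dep (fun j => r j == k)) /=; last by move=> x j _ /andP[].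
by apply: eq_bigr => j rjk; rewrite (big_pred1 (s j)) // => x; rewrite rjk eq_sym.
Qed.

Lemma mulmx_wperm0 r s r' s' v w : (forall j j', s j != r' j') ->
  wperm_mx r s v *m wperm_mx r' s' w = 0.
Proof.
move=> s_r'; apply/matrixP => k l; rewrite mulmx_wpermE mxE big1 // => j _.
rewrite mxE big1 ?mulr0 // => j' /andP[/eqP rs _].
by have := s_r' j j'; rewrite rs eqxx.
Qed.

Lemma mulmx_wperm r s s' v w : injective s ->
  wperm_mx r s v *m wperm_mx s s' w = wperm_mx r s' (fun j => v j * w j).
Proof.
move=> s_inj; apply/matrixP => k l; rewrite mulmx_wpermE mxE big_mkcondr /=.
apply: eq_bigr => j _; rewrite wperm_mx_injl // mulrCA.
by case: (s' j == l); rewrite ?mul1r ?mul0r ?mulr0.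
Qed.

Lemma opnorm_le_wperm r s w (e : R) : injective r -> injective s ->
  (forall j, `|w j| ^+ 2 <= (e ^+ 2)%:C) -> opnorm_le (wperm_mx r s w) e.
Proof.
move=> r_inj s_inj w_le v; rewrite /vnorm2.
have row_sq k : `|(wperm_mx r s w *m v) k 0| ^+ 2 =
    \sum_(j | r j == k) `|w j| ^+ 2 * `|v (s j) 0| ^+ 2.
  have fiber1 j j' : r j == k -> r j' == k -> j = j' by move=> /eqP <- /eqP /r_inj.
  rewrite mulmx_wpermE !big_at_most_one //.
  by case: pickP => [j _|_]; rewrite ?normrM ?exprMn // normr0 expr0n.
under eq_bigr do rewrite row_sq.
rewrite sum_fibers mulr_sumr.
apply: le_trans (_ : \sum_j (e ^+ 2)%:C * `|v (s j) 0| ^+ 2 <= _).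
  by apply: ler_sum => j _; rewrite ler_wpM2r // exprn_ge0.
rewrite -!mulr_sumr ler_wpM2l ?ler0c ?sqr_ge0 // -(sum_fibers s (fun j => `|v (s j) 0| ^+ 2)).
apply: ler_sum => l _; rewrite big_at_most_one; last by move=> j j' /eqP <- /eqP /s_inj.
by case: pickP => [j /eqP -> | _]; rewrite ?exprn_ge0.
Qed.

Lemma wperm_mx_diag s w : wperm_mx s s w = diag_mx (\row_k \sum_(j | s j == k) w j).
Proof.
apply/matrixP => k l; rewrite !mxE; case: eqVneq => [<- | nkl].
  by apply: eq_bigl => j; rewrite andbb.
by rewrite big_pred0 // => j; apply/andP => -[/eqP -> /eqP]; apply/eqP.
Qed.

Lemma mxtrace_wperm s w : \tr (wperm_mx s s w) = \sum_j w j.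
Proof. by rewrite wperm_mx_diag mxtrace_diag; under eq_bigr do rewrite mxE; exact: sum_fibers. Qed.

Lemma mxpow_diag (d : 'rV[C]_m) i : mxpow (diag_mx d) i = diag_mx (\row_k (d 0 k ^+ i)).
Proof.
elim: i => [|i IH]; first by apply/matrixP => a b; rewrite !mxE.
rewrite /mxpow /= -/(mxpow _ i) IH mulmx_diag; congr diag_mx.
by apply/rowP => k; rewrite !mxE exprS.
Qed.

Lemma poly_mx_diag (P : {poly R}) (d : 'I_m -> R) :
  poly_mx P (diag_mx (\row_k (d k)%:C)) = diag_mx (\row_k (P.[d k])%:C).
Proof.
rewrite /poly_mx; under eq_bigr do rewrite mxpow_diag.
apply/matrixP => k l; rewrite summxE !mxE; under eq_bigr do rewrite !mxE.
case: eqVneq => [_|_] /=; last by rewrite big1 // => i _; rewrite mulr0n mulr0.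
by rewrite mulr1n horner_coef rmorph_sum; apply: eq_bigr => i _; rewrite mulr1n rmorphM rmorphXn.
Qed.

Lemma poly_mx_wperm (P : {poly R}) s (d : 'I_L -> R) : injective s -> P.[0] = 0 ->
  poly_mx P (wperm_mx s s (fun j => (d j)%:C)) = wperm_mx s s (fun j => (P.[d j])%:C).
Proof.
move=> s_inj P0; rewrite !wperm_mx_diag.
have -> : \row_k \sum_(j | s j == k) (d j)%:C = \row_k (\sum_(j | s j == k) d j)%:C :> 'rV[C]_m.
  by apply/rowP => k; rewrite !mxE rmorph_sum.
rewrite poly_mx_diag; congr diag_mx; apply/rowP => k; rewrite !mxE -rmorph_sum.
have fiber1 i j : s i == k -> s j == k -> i = j by move=> /eqP <- /eqP /s_inj.
by rewrite !big_at_most_one //; case: pickP => [i _ | _] //; rewrite P0 rmorph0.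
Qed.

Lemma wperm_mx_widen L' (le_LL' : (L <= L')%N) r s w (r' s' : 'I_L' -> 'I_m) (w' : 'I_L' -> C) :
  (forall j, r' (widen_ord le_LL' j) = r j) -> (forall j, s' (widen_ord le_LL' j) = s j) ->
  (forall j, w' (widen_ord le_LL' j) = w j) -> (forall j : 'I_L', (L <= j)%N -> w' j = 0) ->
  wperm_mx r s w = wperm_mx r' s' w'.
Proof.
move=> er es ew w'0; apply/matrixP => k l; rewrite !mxE (bigID (fun j : 'I_L' => (j < L)%N)) /=.
rewrite [X in _ = _ + X]big1 ?addr0 => [|j /andP[_]]; last by rewrite -leqNgt => /w'0.
by rewrite big_ord_narrow_cond; apply: eq_big => j; rewrite ?er ?es ?ew.
Qed.

End WeightedPermutationMatrix.

Section ConnectingMap.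
Variables (R : realType) (q : nat).
Local Notation C := R[i].

Definition tens_ord n (c : 'I_q) (k : 'I_(q ^ n)) : 'I_(q ^ n.+1) :=
  cast_ord (esym (expnS q n)) (mxtens_index (c, k)).

Lemma tens_ord_eq n (c c' : 'I_q) (k k' : 'I_(q ^ n)) :
  (tens_ord c k == tens_ord c' k') = (c == c') && (k == k').
Proof.
apply/eqP/andP => [/(congr1 (cast_ord (expnS q n))) | [/eqP-> /eqP->] //].
by rewrite !cast_ordKV => /(congr1 (@mxtens_unindex _ _)); rewrite !mxtens_indexK => -[-> ->].
Qed.

Lemma tens_ordP n (k : 'I_(q ^ n.+1)) : exists c k0, k = tens_ord c k0.
Proof.
exists (mxtens_unindex (cast_ord (expnS q n) k)).1, (mxtens_unindex (cast_ord (expnS q n) k)).2.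
by rewrite /tens_ord -surjective_pairing mxtens_unindexK cast_ordK.
Qed.

Lemma uhf_step_tens n (M : 'M[C]_(q ^ n)) (c c' : 'I_q) (k l : 'I_(q ^ n)) :
  uhf_step M (tens_ord c k) (tens_ord c' l) = (c == c')%:R * M k l.
Proof. by rewrite /uhf_step castmxE /= !cast_ordK tensmxE mxE. Qed.

Definition tens_lift n L (r : 'I_L -> 'I_(q ^ n)) (x : 'I_(L * q)) : 'I_(q ^ n.+1) :=
  tens_ord (mxtens_unindex x).2 (r (mxtens_unindex x).1).

Lemma uhf_step_wperm n L (r s : 'I_L -> 'I_(q ^ n)) (w : 'I_L -> C) :
  uhf_step (wperm_mx r s w) =
  wperm_mx (tens_lift r) (tens_lift s) (fun x => w (mxtens_unindex x).1).
Proof.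
apply/matrixP => k l; have [c [k0 ->]] := tens_ordP k; have [c' [l0 ->]] := tens_ordP l.
rewrite uhf_step_tens !mxE (reindex (@mxtens_index _ _)); last first.
  by exists (@mxtens_unindex _ _) => x _; rewrite (mxtens_indexK, mxtens_unindexK).
under eq_bigl do rewrite /tens_lift mxtens_indexK !tens_ord_eq.
under eq_bigr do rewrite mxtens_indexK.
case: eqVneq => [<- | cc']; last first.
  rewrite mul0r big_pred0 // => -[j d] /=.
  by apply/negP => /andP[/andP[/eqP dc _] /andP[/eqP dc' _]]; move: cc'; rewrite -dc -dc' eqxx.
rewrite mul1r (eq_bigl (fun x => ((r x.1 == k0) && (s x.1 == l0)) && (x.2 == c))); last first.
  by move=> -[j d] /=; rewrite andbACA andbb andbC.
rewrite -(pair_big_dep (fun j => (r j == k0) && (s j == l0)) (fun _ d => d == c) (fun j _ => w j)).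
by apply: eq_bigr => j _; rewrite big_pred1_eq.
Qed.

End ConnectingMap.

Lemma sqrt_sub_sqr_le (R : realType) (a b : R) : 0 <= a -> 0 <= b ->
  (Num.sqrt a - Num.sqrt b) ^+ 2 <= `|a - b|.
Proof.
move=> a0 b0; rewrite -{2}(sqr_sqrtr a0) -{2}(sqr_sqrtr b0).
have := sqrtr_ge0 a; have := sqrtr_ge0 b.
move: (Num.sqrt a) (Num.sqrt b) => s t t0 s0.
have [ts|st] := lerP t s.
  by rewrite ger0_norm; [nra | rewrite subr_ge0 ler_pXn2r // nnegrE].
by rewrite ler0_norm; [nra | rewrite subr_le0 ler_pXn2r // ?nnegrE ltW].
Qed.

Lemma normcR (R : realType) (a : R) : `|a%:C| = `|a|%:C.
Proof. by rewrite normc_def /= expr0n /= addr0 sqrtr_sqr. Qed.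

Lemma normcR_sqr (R : realType) (a : R) : `|a%:C| ^+ 2 = (a ^+ 2)%:C.
Proof. by rewrite normcR -rmorphXn /= real_normK // num_real. Qed.

Lemma opnorm_le0 (R : realType) m (e : R) : opnorm_le (0 : 'M[R[i]]_m) e.
Proof.
move=> v; rewrite mul0mx /vnorm2 big1 => [|k _]; last by rewrite mxE normr0 expr0n.
by rewrite mulr_ge0 ?ler0c ?sqr_ge0 // sumr_ge0 // => k _; rewrite exprn_ge0.
Qed.

Lemma uhf_null0 (R : realType) q (x : uhf_seq R q) : (forall n, x n = 0) -> uhf_null x.
Proof. by move=> x0 eps _; exists 0%N => n _; rewrite x0; exact: opnorm_le0. Qed.

Section Construction.
Variables (R : realType) (q p : nat).
Hypotheses (q_gt1 : (1 < q)%N) (p_gt1 : (1 < p)%N).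
Local Notation C := R[i].
Local Notation rk := (rk q p).

Definition idx_ord n i : 'I_(rk n) -> 'I_(q ^ n) := fun j => Ordinal (idx_lt p q_gt1 n i j).
Arguments idx_ord : clear implicits.

Definition Xmx n i (w : nat -> C) : 'M[C]_(q ^ n) :=
  wperm_mx (idx_ord n i) (idx_ord n 1) (fun j => w j).

Lemma idx_ord_inj n i : (0 < i <= p)%N -> injective (idx_ord n i).
Proof.
move=> ip j j' /(congr1 val) /(idx_inj q_gt1 p_gt1 ip ip (ltn_ord j) (ltn_ord j')) [_ e].
exact: val_inj.
Qed.

Lemma idx_ord_neq n i i' j j' : (0 < i <= p)%N -> (0 < i' <= p)%N -> i != i' ->
  idx_ord n i j != idx_ord n i' j'.
Proof.
move=> ip i'p ii'; apply/eqP => /(congr1 val).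
move=> /(idx_inj q_gt1 p_gt1 ip i'p (ltn_ord j) (ltn_ord j')) [ei _].
by rewrite ei eqxx in ii'.
Qed.

Let one_p : (0 < 1 <= p)%N. Proof. exact: ltnW. Qed.

Lemma Xmx_mul0 n i j v w : (0 < i <= p)%N -> (0 < j <= p)%N -> j != 1%N ->
  Xmx n i v *m Xmx n j w = 0.
Proof. by move=> ip jp j1; apply: mulmx_wperm0 => a b; rewrite idx_ord_neq // eq_sym. Qed.

Lemma adjXmx_mul0 n i j w : (0 < i <= p)%N -> (0 < j <= p)%N -> i != j ->
  adjmx (Xmx n i w) *m Xmx n j w = 0.
Proof.
by move=> ip jp ij; rewrite adjmx_wperm; apply: mulmx_wperm0 => a b; rewrite idx_ord_neq.
Qed.

Lemma adjXmx_mul n i w : (0 < i <= p)%N ->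
  adjmx (Xmx n i w) *m Xmx n i w =
  wperm_mx (idx_ord n 1) (idx_ord n 1) (fun j => conjc (w j) * w j).
Proof. by move=> ip; rewrite adjmx_wperm mulmx_wperm //; exact: idx_ord_inj. Qed.

Lemma opnorm_le_Xmx n i w (e : R) : (0 < i <= p)%N ->
  (forall j, (j < rk n)%N -> `|w j| ^+ 2 <= (e ^+ 2)%:C) -> opnorm_le (Xmx n i w) e.
Proof.
by move=> ip w_le; apply: opnorm_le_wperm => [||j]; [exact: idx_ord_inj.. | exact: w_le].
Qed.

Lemma eq_Xmx n i v w : (forall j, (j < rk n)%N -> v j = w j) -> Xmx n i v = Xmx n i w.
Proof. by move=> vw; rewrite /Xmx; congr wperm_mx; apply/funext => j; exact: vw. Qed.

Definition spread n k (w : nat -> C) x : C :=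
  if (x < rk n * q ^ k)%N then w (x %/ q ^ k)%N else 0.

Lemma Xmx_step n i w : (0 < i <= p)%N -> uhf_step (Xmx n i w) = Xmx n.+1 i (spread n 1 w).
Proof.
move=> ip; rewrite /Xmx uhf_step_wperm; apply: (wperm_mx_widen (le_LL' := rk_mulq q p_gt1 n)).
- by move=> x; apply: val_inj; rewrite /= (idx_step q_gt1 i (ltn_ord x)).
- by move=> x; apply: val_inj; rewrite /= (idx_step q_gt1 1 (ltn_ord x)).
- by move=> x; rewrite /spread expn1 /= ltn_ord.
- by move=> x; rewrite /spread expn1 ltnNge => ->.
Qed.

Lemma spread_step n k w x :
  spread (k + n) 1 (spread n k w) x = spread n k.+1 w x.
Proof.
have q0 : (0 < q)%N by apply: ltnW.
have e_div : (x %/ q ^ k.+1 = x %/ q %/ q ^ k)%N by rewrite expnS divnMA.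
have e_lt : (x < rk n * q ^ k.+1)%N = (x %/ q < rk n * q ^ k)%N.
  by rewrite ltn_divLR // expnSr mulnA.
rewrite /spread expn1 e_div e_lt; case: (ltnP (x %/ q) (rk n * q ^ k)) => xq; last by case: ifP.
by rewrite ifT // -ltn_divLR // (leq_trans xq (rk_mulX q p_gt1 n k)).
Qed.

Lemma Xmx_emb n k i w : (0 < i <= p)%N -> uhf_emb k (Xmx n i w) = Xmx (k + n) i (spread n k w).
Proof.
move=> ip; elim: k => [|k IH] /=.
  by apply: eq_Xmx => j jn; rewrite /spread expn0 muln1 divn1 jn.
by rewrite IH Xmx_step //; apply: eq_Xmx => j _; exact: spread_step.
Qed.

Lemma XmxB n i v w : Xmx n i v - Xmx n i w = Xmx n i (fun x => v x - w x).
Proof. exact: wperm_mxB. Qed.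

Definition mesh n : R := p%:R / (q ^ n)%:R.

Definition weight n x : C := (Num.sqrt (1 - x%:R * mesh n))%:C.

Definition xseq i : uhf_seq R q := fun n => Xmx n i (weight n).

Let pinv_le1 : (p%:R : R)^-1 <= 1.
Proof. by rewrite invf_le1 ?ltr0n ?ler1n ltnW. Qed.

Let qn_gt0 n : (0 : R) < (q ^ n)%:R.
Proof. by rewrite ltr0n expn_gt0 ltnW. Qed.

Lemma mesh_gt0 n : 0 < mesh n.
Proof. by rewrite divr_gt0 // ltr0n ltnW. Qed.

Lemma mesh_expX n k : (q ^ k)%:R * mesh (k + n) = mesh n.
Proof. by rewrite /mesh expnD natrM; field; rewrite !gt_eqF. Qed.

Lemma rk_mesh_le n : (rk n)%:R * mesh n <= 1.
Proof. by rewrite mulrA ler_pdivrMr // mul1r -natrM ler_nat mulnC rk_ub. Qed.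

Lemma rk_mesh_gt n : 1 < (rk n).+1%:R * mesh n.
Proof. by rewrite mulrA ltr_pdivlMr // mul1r -natrM ltr_nat mulnC rk_lb. Qed.

Lemma sub_mesh_ge0 n x : (x <= rk n)%N -> 0 <= 1 - x%:R * mesh n.
Proof.
move=> xn; rewrite subr_ge0 (le_trans _ (rk_mesh_le n)) // ler_wpM2r ?ler_nat //.
exact: ltW (mesh_gt0 n).
Qed.

Lemma weight_sqr n x : (x <= rk n)%N -> `|weight n x| ^+ 2 = (1 - x%:R * mesh n)%:C.
Proof. by move=> xn; rewrite normcR_sqr sqr_sqrtr // sub_mesh_ge0. Qed.

Lemma spread_weight_close n k x : (x < rk (k + n))%N ->
  `|spread n k (weight n) x - weight (k + n) x| ^+ 2 <= (mesh n)%:C.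
Proof.
move=> xL; have m0 := ltW (mesh_gt0 (k + n)); rewrite /spread; case: ifP => xS.
  have jn : (x %/ q ^ k < rk n)%N by rewrite ltn_divLR // expn_gt0 ltnW.
  rewrite /weight -rmorphB normcR_sqr lecR.
  apply: le_trans (sqrt_sub_sqr_le (sub_mesh_ge0 (ltnW jn)) (sub_mesh_ge0 (ltnW xL))) _.
  have -> : 1 - (x %/ q ^ k)%:R * mesh n - (1 - x%:R * mesh (k + n)) =
      (x %% q ^ k)%:R * mesh (k + n).
    by rewrite -(mesh_expX n k) {2}(divn_eq x (q ^ k)) natrD natrM; ring.
  rewrite ger0_norm ?mulr_ge0 // -(mesh_expX n k) ler_wpM2r // ler_nat ltnW // ltn_mod.
  by rewrite expn_gt0 ltnW.
rewrite sub0r normrN weight_sqr ?(ltnW xL) // lecR.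
move: xS => /negbT; rewrite -leqNgt => xS.
have : (rk n * q ^ k)%:R * mesh (k + n) <= x%:R * mesh (k + n) by rewrite ler_wpM2r ?ler_nat.
by rewrite natrM -mulrA mesh_expX; have := rk_mesh_gt n; rewrite -natr1 mulrDl mul1r; lra.
Qed.

Lemma mesh_small e : 0 < e -> exists N, forall n, (N <= n)%N -> mesh n <= e.
Proof.
move=> e0; have pe0 : 0 <= p%:R / e by rewrite divr_ge0 // ltW.
exists (Num.Def.archi_bound (p%:R / e)) => n Nn.
rewrite /mesh ler_pdivrMr // mulrC -ler_pdivrMr //.
apply: le_trans (ltW (archi_boundP pe0)) _.
by rewrite ler_nat (leq_trans Nn) // ltnW // ltn_expl.
Qed.

Lemma xseq_cauchy i : (0 < i <= p)%N -> uhf_cauchy (xseq i).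
Proof.
move=> ip eps eps0; have [N hN] := mesh_small (mulr_gt0 eps0 eps0).
exists N => n k Nn; rewrite /xseq Xmx_emb // XmxB; apply: opnorm_le_Xmx => // x xL.
by apply: le_trans (spread_weight_close xL) _; rewrite lecR expr2 hN.
Qed.

Lemma xseq_norm i : (0 < i <= p)%N -> uhf_norm_le (xseq i) 1.
Proof.
move=> ip eps eps0; exists 0%N => n _; apply: opnorm_le_Xmx => // x xL.
rewrite weight_sqr ?(ltnW xL) // lecR.
have : 1 <= (1 + eps) ^+ 2 by rewrite expr_ge1 // ?lerDl ?addr_ge0 // ltW.
have : 0 <= x%:R * mesh n by rewrite mulr_ge0 // ltW // mesh_gt0.
lra.
Qed.

Lemma xseq_mul0 i j : (0 < i <= p)%N -> (0 < j <= p)%N -> j != 1%N ->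
  uhf_null (uhf_mul (xseq i) (xseq j)).
Proof.
by move=> ip jp j1; apply: uhf_null0 => n; exact: Xmx_mul0.
Qed.

Lemma xseq_adj i j : (0 < i <= p)%N -> (0 < j <= p)%N ->
  uhf_null (uhf_sub (uhf_mul (uhf_adj (xseq i)) (xseq j))
                    (uhf_scale (i == j)%:R (uhf_mul (uhf_adj (xseq 2)) (xseq 2)))).
Proof.
move=> ip jp; apply: uhf_null0 => n; rewrite /uhf_sub /uhf_mul /uhf_adj /uhf_scale /xseq.
have [<-|ij] := eqVneq i j; last by rewrite adjXmx_mul0 // scale0r subr0.
by rewrite !adjXmx_mul // scale1r subrr.
Qed.

Lemma ntr_poly_xseq2 (P : {poly R}) n : P.[0] = 0 ->
  ntr (poly_mx P (uhf_mul (uhf_adj (xseq 2)) (xseq 2) n)) =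
  ((\sum_(j < rk n) P.[1 - j%:R * mesh n]) / (q ^ n)%:R)%:C.
Proof.
move=> P0; rewrite /uhf_mul /uhf_adj /xseq adjXmx_mul //.
have -> : (fun j : 'I_(rk n) => conjc (weight n j) * weight n j) =
    (fun j : 'I_(rk n) => (1 - j%:R * mesh n)%:C).
  apply/funext => j; rewrite /weight conjc_real -rmorphM -expr2 sqr_sqrtr //.
  exact: sub_mesh_ge0 (ltnW (ltn_ord j)).
rewrite (poly_mx_wperm (fun j : 'I_(rk n) => 1 - j%:R * mesh n)) //; last exact: idx_ord_inj.
rewrite /ntr mxtrace_wperm.
by rewrite rmorphM fmorphV /= rmorph_nat rmorph_sum.
Qed.

Lemma ntr_poly_xseq2_approx (P : {poly R}) n : P.[0] = 0 ->
  `|ntr (poly_mx P (uhf_mul (uhf_adj (xseq 2)) (xseq 2) n)) -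
    ((p%:R)^-1 * \int[lebesgue_measure]_(t in `[0, 1]) P.[t])%:C| <=
  ((coef_lip P + coef_norm1 P) * mesh n)%:C.
Proof.
move=> P0; rewrite ntr_poly_xseq2 // -rmorphB normcR lecR.
have p0 : (0 : R) < p%:R by rewrite ltr0n ltnW.
have -> : (\sum_(j < rk n) P.[1 - j%:R * mesh n]) / (q ^ n)%:R -
    (p%:R)^-1 * \int[lebesgue_measure]_(t in `[0, 1]) P.[t] =
    (p%:R)^-1 * (mesh n * \sum_(j < rk n) P.[1 - j%:R * mesh n] -
                 \int[lebesgue_measure]_(t in `[0, 1]) P.[t]).
  by rewrite /mesh; field; rewrite !gt_eqF.
rewrite normrM ger0_norm ?invr_ge0 ?ler0n //.
apply: le_trans (ler_piMl (normr_ge0 _) pinv_le1) _.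
exact (riemann_sum_approx (@horner_continuous01 _ P) (@horner_lipschitz01 _ P)
  (@horner_bounded01 _ P) (mesh_gt0 n) (rk_mesh_le n) (rk_mesh_gt n)).
Qed.

Lemma tau_xseq2 (f : R -> R) : {within `[0, 1], continuous f} ->
  tau_fcalc_is f (uhf_mul (uhf_adj (xseq 2)) (xseq 2))
    (((p%:R)^-1 * \int[lebesgue_measure]_(t in `[0, 1]) f t)%:C).
Proof.
move=> fc P P0 Pf eps eps0; have eps2 : 0 < eps / 2 by rewrite divr_gt0.
have [K hK] := Pf _ eps2; exists K => k Kk.
set M := coef_lip (P k) + coef_norm1 (P k).
have M0 : 0 <= M.
  by rewrite addr_ge0 // sumr_ge0 // => i _; rewrite ?mulr_ge0.
have [N hN] := mesh_small (divr_gt0 eps2 (ltr_pwDr ltr01 M0)); exists N => n Nn.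
have int_close : `|(p%:R)^-1 * \int[lebesgue_measure]_(t in `[0, 1]) (P k).[t] -
    (p%:R)^-1 * \int[lebesgue_measure]_(t in `[0, 1]) f t| <= eps / 2.
  rewrite -mulrBr normrM ger0_norm ?invr_ge0 ?ler0n //.
  apply: le_trans (ler_piMl (normr_ge0 _) pinv_le1) _.
  apply: Rintegral01_close (@horner_continuous01 _ _) fc _ => t t01.
  by rewrite distrC hK.
rewrite (_ : eps%:C = (eps / 2)%:C + (eps / 2)%:C); last by rewrite -rmorphD -splitr.
rewrite -[X in `|X|](subrKA (((p%:R)^-1 * \int[lebesgue_measure]_(t in `[0, 1]) (P k).[t])%:C)).
apply: le_trans (ler_normD _ _) (lerD _ _).
  apply: le_trans (ntr_poly_xseq2_approx _ (P0 k)) _; rewrite lecR.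
  apply: le_trans (_ : (M + 1) * mesh n <= _).
    by rewrite ler_wpM2r ?lerDl // ltW // mesh_gt0.
  by rewrite mulrC -ler_pdivlMr ?(ltr_pwDr ltr01 M0) // hN.
by rewrite -rmorphB normcR lecR.
Qed.

End Construction.

Theorem lemma4p4 (R : realType) (p q : nat) (hp : (2 <= p)%N) (hq : (2 <= q)%N) :
  exists x : nat -> uhf_seq R q,
    (forall i : nat, (2 <= i <= p)%N -> uhf_cauchy (x i)) /\
    (forall i : nat, (2 <= i <= p)%N -> uhf_norm_le (x i) 1) /\
    (forall i j : nat, (2 <= i <= p)%N -> (2 <= j <= p)%N -> i != j ->
       uhf_null (uhf_mul (x i) (x j))) /\
    (forall i j : nat, (2 <= i <= p)%N -> (2 <= j <= p)%N ->
       uhf_null (uhf_sub (uhf_mul (uhf_adj (x i)) (x j))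
                         (uhf_scale (i == j)%:R (uhf_mul (uhf_adj (x 2%N)) (x 2%N))))) /\
    (forall f : R -> R,
       {within `[0, 1]%classic, continuous f} -> f 0 = 0 ->
       tau_fcalc_is f (uhf_mul (uhf_adj (x 2%N)) (x 2%N))
         (((p%:R)^-1 * \int[@lebesgue_measure R]_(t in `[0, 1]%classic) f t)%:C)).
Proof.
have pos i : (2 <= i <= p)%N -> (0 < i <= p)%N by case/andP => i2 ->; rewrite andbT ltnW.
exists (xseq R p hq).
split; first by move=> i /pos; exact: xseq_cauchy.
split; first by move=> i /pos; exact: xseq_norm.
split.
  move=> i j /pos ip jp _; apply: xseq_mul0 => //; first exact: pos.
  by case/andP: jp => j2 _; rewrite gtn_eqF.
split; first by move=> i j /pos ip /pos jp; exact: xseq_adj.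
by move=> f fc _; exact: tau_xseq2.
Qed.
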